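(* Let $\omega_0$ and $\omega_1$ be two symplectic (nondegenerate, antisymmetric) bilinear forms on $\mathbb{R}^4$ and let $\Sigma\subset\mathbb{R}^4$ be a $3$-dimensional linear subspace such that: (i) if $v,w\in\Sigma$ and $\omega_0(v,w)$ or $\omega_1(v,w)$ is positive, then $\omega_0(v,w)$ and $\omega_1(v,w)$ are both nonnegative; (ii) if $v\in\ker(\omega_0|_{\Sigma})\cap\ker(\omega_1|_{\Sigma})$ and $\omega_0(v,w)>0$, then $\omega_1(v,w)\ge 0$. Then for all $0\le t\le 1$, the form $t\omega_0+(1-t)\omega_1$ is symplectic. *)

From HB Require Import structures.
From mathcomp Require Import all_boot all_order all_algebra.
From mathcomp Require Import reals.
Set Implicit Arguments. Unset Strict Implicit. Unset Printing Implicit Defensive.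
Import Order.TTheory GRing.Theory Num.Theory.
Local Open Scope ring_scope.

Definition bform {R : realType} (A : 'M[R]_4) (v w : 'rV[R]_4) : R :=
  (v *m A *m w^T) 0 0.

Definition antisymmetric {R : realType} (A : 'M[R]_4) : Prop :=
  forall v w, bform A v w = - bform A w v.

Definition nondegenerate {R : realType} (A : 'M[R]_4) : Prop :=
  forall v, (forall w, bform A v w = 0) -> v = 0.

Definition symplectic {R : realType} (A : 'M[R]_4) : Prop :=
  antisymmetric A /\ nondegenerate A.

Definition in_restr_ker {R : realType} {m : nat} (A : 'M[R]_4) (S : 'M[R]_(m, 4))
  (v : 'rV[R]_4) : Prop :=
  (v <= S)%MS /\ forall w, (w <= S)%MS -> bform A v w = 0.

From Pilot Require Import Defs.
From HB Require Import structures.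
From mathcomp Require Import all_boot all_order all_algebra.
From mathcomp Require Import boolp reals.
From mathcomp Require Import lra.
Import Order.TTheory GRing.Theory Num.Theory.
Local Open Scope ring_scope.

(* An antisymmetric form restricted to the odd-dimensional subspace Sigma is
   degenerate, so Sigma contains a nonzero vector u orthogonal to Sigma for
   omega_t := t omega_0 + (1 - t) omega_1.  If omega_t had a nonzero kernel
   vector v, one could take u in that kernel as well: either v itself lies in
   Sigma, or Sigma + v is everything and omega_t(u, v) = -omega_t(v, u) = 0.
   For 0 < t < 1 such a u cannot exist: omega_t(u, w) = 0 with one of
   omega_0(u, w), omega_1(u, w) positive and the other nonnegative is
   impossible, so (i) forces u into the kernels of both restrictions, and
   then (ii), applied to a w with omega_0(u, w) > 0, gives the same clash. *)

Lemma det_skew_odd {F : numFieldType} {n} {B : 'M[F]_n} :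
  B^T = - B -> odd n -> \det B = 0.
Proof.
move=> skewB oddn; apply/eqP.
have : \det B = - \det B.
  by rewrite -{1}det_tr skewB -scaleN1r detZ -signr_odd oddn expr1 mulN1r.
by move/eqP; rewrite -addr_eq0 -mulr2n mulrn_eq0.
Qed.

Lemma skew_restr_ker {F : numFieldType} {m n} {C : 'M[F]_n} {S : 'M[F]_(m, n)} :
  C^T = - C -> row_free S -> odd m ->
  exists u : 'rV_n, [/\ u != 0, (u <= S)%MS & u *m C *m S^T = 0].
Proof.
move=> skewC freeS oddm.
have skewB : (S *m C *m S^T)^T = - (S *m C *m S^T).
  by rewrite !trmx_mul trmxK skewC mulNmx mulmxN mulmxA.
have /det0P [y y0 hy] : \det (S *m C *m S^T) == 0.
  by rewrite det_skew_odd.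
exists (y *m S); split; last by rewrite !mulmxA in hy *.
- apply: contra y0 => /eqP yS0; apply/eqP.
  by apply: (row_free_inj freeS); rewrite yS0 mul0mx.
- exact: submxMl.
Qed.

Section BilinearForms.
Context {R : realType}.
Implicit Types (A B C : 'M[R]_4) (u v w : 'rV[R]_4).

Lemma bform_comb a b A B v w :
  bform (a *: A + b *: B) v w = a * bform A v w + b * bform B v w.
Proof. by rewrite /bform mulmxDr mulmxDl -!scalemxAr -!scalemxAl !mxE. Qed.

Lemma bformDr A v w1 w2 : bform A v (w1 + w2) = bform A v w1 + bform A v w2.
Proof. by rewrite /bform linearD /= mulmxDr mxE. Qed.

Lemma bformZr A v a w : bform A v (a *: w) = a * bform A v w.
Proof. by rewrite /bform linearZ /= -scalemxAr mxE. Qed.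

Lemma bform_sg_gt0 {A v w} :
  bform A v w != 0 -> 0 < bform A v (Num.sg (bform A v w) *: w).
Proof. by rewrite bformZr -normrEsg normr_gt0. Qed.

Lemma antisymmetric_comb {A B} a b :
  Defs.antisymmetric A -> Defs.antisymmetric B ->
  Defs.antisymmetric (a *: A + b *: B).
Proof.
by move=> antiA antiB v w; rewrite !bform_comb antiA antiB opprD -!mulrN.
Qed.

Lemma antisymmetric_trmx {C} : Defs.antisymmetric C -> C^T = - C.
Proof.
move=> antiC; apply/matrixP => i j.
have bform_delta k l : bform C (delta_mx 0 k) (delta_mx 0 l) = C k l.
  by rewrite /bform trmx_delta -rowE -colE !mxE.
by rewrite !mxE -!bform_delta antiC.
Qed.

Lemma nondegenerate_gt0 {A u} :
  Defs.nondegenerate A -> u != 0 -> exists w, 0 < bform A u w.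
Proof.
move=> ndA u0; have [w /eqP Auw] : exists w, bform A u w <> 0.
  by apply/existsNP => Au0; move/eqP: u0; apply; apply: ndA.
by exists (Num.sg (bform A u w) *: w); apply: bform_sg_gt0.
Qed.

Lemma antisymmetric_restr_ker {m C} {S : 'M[R]_(m, 4)} :
  Defs.antisymmetric C -> \rank S = m -> odd m ->
  exists u, [/\ u != 0, (u <= S)%MS & forall x, (x <= S)%MS -> bform C u x = 0].
Proof.
move=> antiC rkS oddm.
have freeS : row_free S by rewrite /row_free rkS.
have [u [u0 uS uCS]] := skew_restr_ker (antisymmetric_trmx antiC) freeS oddm.
exists u; split=> // x /submxP [z ->].
by rewrite /bform trmx_mul mulmxA uCS mul0mx mxE.
Qed.

Lemma ker_meets_hyperplane {C} {S : 'M[R]_(3, 4)} {v} :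
  Defs.antisymmetric C -> \rank S = 3%N ->
  v != 0 -> (forall w, bform C v w = 0) ->
  exists u, [/\ u != 0, (u <= S)%MS & forall w, bform C u w = 0].
Proof.
move=> antiC rkS v0 kerv.
have [vS | vNS] := boolP (v <= S)%MS; first by exists v.
have [u [u0 uS uCS]] := antisymmetric_restr_ker antiC rkS isT.
exists u; split=> // w.
have fullSv : row_full (S + v)%MS.
  have : (S < S + v)%MS by rewrite ltmxE addsmxSl addsmx_sub negb_and vNS orbT.
  by rewrite ltmxErank rkS -col_leq_rank => /andP [].
have /sub_addsmxP [[a b] /= ->] := submx_full w fullSv.
rewrite bformDr uCS ?submxMl // (mx11_scalar b) mul_scalar_mx bformZr.
by rewrite antiC kerv oppr0 mulr0 addr0.
Qed.

Section Interpolation.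
Context {A0 A1 : 'M[R]_4} {m : nat} {S : 'M[R]_(m, 4)} {t : R}.
Hypothesis nondeg0 : Defs.nondegenerate A0.
Hypothesis hi : forall v w, (v <= S)%MS -> (w <= S)%MS ->
  (0 < bform A0 v w \/ 0 < bform A1 v w) ->
  0 <= bform A0 v w /\ 0 <= bform A1 v w.
Hypothesis hii : forall v w, in_restr_ker A0 S v -> in_restr_ker A1 S v ->
  0 < bform A0 v w -> 0 <= bform A1 v w.
Hypotheses (t_gt0 : 0 < t) (t_lt1 : t < 1).

Lemma comb_zero_sign {v w} :
  bform (t *: A0 + (1 - t) *: A1) v w = 0 -> 0 < bform A0 v w ->
  bform A1 v w < 0.
Proof.
rewrite bform_comb => comb0 pos0; rewrite ltNge; apply/negP => nneg1.
have := mulr_gt0 t_gt0 pos0.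
have : 0 <= 1 - t by rewrite subr_ge0 ltW.
move/mulr_ge0/(_ nneg1).
lra.
Qed.

Lemma comb_ker_restr_ker {u} :
  (u <= S)%MS -> (forall w, bform (t *: A0 + (1 - t) *: A1) u w = 0) ->
  in_restr_ker A0 S u /\ in_restr_ker A1 S u.
Proof.
move=> uS keru.
have ker0 w : (w <= S)%MS -> bform A0 u w = 0.
  move=> wS; apply/eqP/negP => /negP /bform_sg_gt0 pos0.
  have sgwS : (Num.sg (bform A0 u w) *: w <= S)%MS by rewrite scalemx_sub.
  have [_ nneg1] := hi _ _ uS sgwS (or_introl pos0).
  by move: (comb_zero_sign (keru _) pos0); rewrite ltNge nneg1.
split; split=> // w wS; have := keru w.
rewrite bform_comb ker0 // mulr0 add0r => /eqP.
by rewrite mulf_eq0 subr_eq0 (gt_eqF t_lt1) => /eqP.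
Qed.

Lemma comb_ker_subspace_trivial {u} :
  (u <= S)%MS -> (forall w, bform (t *: A0 + (1 - t) *: A1) u w = 0) -> u = 0.
Proof.
move=> uS keru; apply/eqP; apply: contraT => u0.
have [w pos0] := nondegenerate_gt0 nondeg0 u0.
have [ker0 ker1] := comb_ker_restr_ker uS keru.
by move: (comb_zero_sign (keru w) pos0); rewrite ltNge (hii _ _ ker0 ker1 pos0).
Qed.

End Interpolation.
End BilinearForms.

Theorem lemma7 (R : realType) (A0 A1 : 'M[R]_4) (S : 'M[R]_(3, 4))
  (hA0 : symplectic A0) (hA1 : symplectic A1)
  (hS : \rank S = 3%N)
  (hi : forall v w : 'rV[R]_4, (v <= S)%MS -> (w <= S)%MS ->
          (0 < bform A0 v w \/ 0 < bform A1 v w) ->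
          0 <= bform A0 v w /\ 0 <= bform A1 v w)
  (hii : forall v w : 'rV[R]_4, in_restr_ker A0 S v -> in_restr_ker A1 S v ->
          0 < bform A0 v w -> 0 <= bform A1 v w) :
  forall t : R, 0 <= t <= 1 -> symplectic (t *: A0 + (1 - t) *: A1).
Proof.
move=> t /andP [t_ge0 t_le1]; have [anti0 nondeg0] := hA0.
have anti_t := antisymmetric_comb t (1 - t) anti0 hA1.1.
split=> //.
have [-> | t_neq0] := eqVneq t 0.
  by rewrite scale0r add0r subr0 scale1r; case: hA1.
have [-> | t_neq1] := eqVneq t 1.
  by rewrite subrr scale0r addr0 scale1r.
have t_gt0 : 0 < t by rewrite lt_def t_neq0.
have t_lt1 : t < 1 by rewrite lt_def eq_sym t_neq1.
move=> v kerv; apply/eqP; apply: contraT => v0.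
have [u [u0 uS keru]] := ker_meets_hyperplane anti_t hS v0 kerv.
have u_eq0 := comb_ker_subspace_trivial nondeg0 hi hii t_gt0 t_lt1 uS keru.
by rewrite u_eq0 eqxx in u0.
Qed.
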